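(* Pareto-RR restricted to instances with a single place ($m=1$) and no lower quotas is solvable in polynomial time.
   Context: An instance of Refugee Resettlement (RR) consists of a set $F$ of families, a set $P=\{p_1,\dots,p_m\}$ of places, a set $S$ of $t$ services, a requirement vector $\boldsymbol{r}_i\in\mathbb{N}^t$ for each family, and lower and upper quota vectors $\underline{\boldsymbol{c}}_j,\bar{\boldsymbol{c}}_j\in\mathbb{N}^t$ for each place. An assignment is $\sigma\colon F\to P\cup\{\bot\}$ ($\bot$ = unassigned); the load of $p_j$ is $\sum_{f_i:\sigma(f_i)=p_j}\boldsymbol{r}_i$; $\sigma$ is feasible if $\underline{\boldsymbol{c}}_j\le$ load $\le\bar{\boldsymbol{c}}_j$ coordinatewise for all $p_j$. No lower quotas: all $\underline{\boldsymbol{c}}_j$ zero. Pareto-RR: each family has a weak order $\succeq_i$ over the places it finds acceptable, preferring each acceptable place to $\bot$; an assignment is acceptable if every family is unassigned or at an acceptable place; a feasible acceptable $\sigma$ is Pareto-optimal if no feasible acceptable $\sigma'$ satisfies $\sigma'(f_i)\succeq_i\sigma(f_i)$ for all families with strict preference for some family. Task: find a feasible acceptable Pareto-optimal assignment or report that none exists. *)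

From mathcomp Require Import all_boot.

Set Implicit Arguments.
Unset Strict Implicit.
Unset Printing Implicit Defensive.

(* An instance with n families ('I_n), m places ('I_m), t services ('I_t). *)
Record instance (n m t : nat) := Instance {
  req  : 'I_n -> 'I_t -> nat;
  lq   : 'I_m -> 'I_t -> nat;
  uq   : 'I_m -> 'I_t -> nat;
  acc  : 'I_n -> 'I_m -> bool;
  pref : 'I_n -> 'I_m -> 'I_m -> bool  (* pref i p q : p  >=_i  q          *)
}.

Definition weak_order_prefs n m t (I : instance n m t) : Prop :=
  forall i : 'I_n,
    (forall p q, acc I i p -> acc I i q -> pref I i p q || pref I i q p) /\
    (forall p q r, acc I i p -> acc I i q -> acc I i r ->
        pref I i p q -> pref I i q r -> pref I i p r).

Definition no_lower_quotas n m t (I : instance n m t) : Prop :=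
  forall (j : 'I_m) (s : 'I_t), lq I j s = 0.

(* assignments: None stands for bottom (unassigned) *)
Definition assignment n m := 'I_n -> option 'I_m.

Definition load n m t (I : instance n m t) (sg : assignment n m)
    (j : 'I_m) (s : 'I_t) : nat :=
  \sum_(i : 'I_n | sg i == Some j) req I i s.

Definition feasible n m t (I : instance n m t) (sg : assignment n m) : Prop :=
  forall (j : 'I_m) (s : 'I_t), lq I j s <= load I sg j s <= uq I j s.

Definition acceptable n m t (I : instance n m t) (sg : assignment n m) : Prop :=
  forall (i : 'I_n) (j : 'I_m), sg i = Some j -> acc I i j.

Definition wpref n m t (I : instance n m t) (i : 'I_n) (a b : option 'I_m) : bool :=
  match a, b with
  | Some p, Some q => pref I i p q
  | Some p, None => acc I i p
  | None, None => true
  | None, Some _ => false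
  end.

Definition spref n m t (I : instance n m t) (i : 'I_n) (a b : option 'I_m) : bool :=
  wpref I i a b && ~~ wpref I i b a.

Definition pareto_optimal n m t (I : instance n m t) (sg : assignment n m) : Prop :=
  feasible I sg /\ acceptable I sg /\
  ~ (exists sg' : assignment n m,
        [/\ feasible I sg', acceptable I sg',
            (forall i, wpref I i (sg' i) (sg i)) &
            exists i, spref I i (sg' i) (sg i)]).

(* Machine model: unit-cost RAM with constants, addition, truncated       *)
(* subtraction, indirect addressing and conditional jumps (polynomially   *)
(* equivalent to Turing machines).                                        *)

Inductive instr :=
  | IConst of nat & nat
  | IAdd of nat & nat & nat
  | ISub of nat & nat & nat
  | ILoad of nat & nat
  | IStore of nat & nat
  | IJz of nat & nat
  | IHalt.

Definition program := seq instr.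

Record state := State { pc : nat; regs : nat -> nat; mem : nat -> nat }.

Definition upd (f : nat -> nat) (x v : nat) : nat -> nat :=
  fun y => if y == x then v else f y.

(* one step; None when the machine has halted (IHalt or pc out of range) *)
Definition step (p : program) (st : state) : option state :=
  let R := regs st in let M := mem st in let k := pc st in
  match nth IHalt p k with
  | IConst r c => Some (State k.+1 (upd R r c) M)
  | IAdd r a b => Some (State k.+1 (upd R r (R a + R b)) M)
  | ISub r a b => Some (State k.+1 (upd R r (R a - R b)) M)
  | ILoad r a => Some (State k.+1 (upd R r (M (R a))) M)
  | IStore a b => Some (State k.+1 R (upd M (R a) (R b)))
  | IJz r l => Some (State (if R r == 0 then l else k.+1) R M)
  | IHalt => None
  end.

Fixpoint exec (p : program) (k : nat) (st : state) : option state :=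
  match k with
  | 0 => Some st
  | k'.+1 => match step p st with
             | Some st' => exec p k' st'
             | None => None
             end
  end.

Definition init_state (s : seq nat) : state :=
  State 0 (fun _ => 0) (fun x => if x is x'.+1 then nth 0 s x' else size s).

Definition output (st : state) : seq nat :=
  mkseq (fun i => mem st i.+1) (mem st 0).

Definition halts_in (p : program) (s : seq nat) (k : nat) (out : seq nat) : Prop :=
  exists st, [/\ exec p k (init_state s) = Some st, step p st = None
               & output st = out].

(* binary size of an input list *)
Definition enc_size (s : seq nat) : nat := \sum_(x <- s) (trunc_log 2 x).+1.

(* With a single place p_1 (= ord0 : 'I_1), lower quotas zero and the weak
   order on the acceptable set {p_1} (or the empty set) being trivial, an
   instance is given by t, n, the upper quota of p_1, and, for each family,
   the acceptability bit and the requirement vector. *)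
Definition encode1 n t (I : instance n 1 t) : seq nat :=
  [:: t; n] ++ [seq uq I ord0 s | s <- enum 'I_t] ++
  flatten [seq nat_of_bool (acc I i ord0) :: [seq req I i s | s <- enum 'I_t]
          | i <- enum 'I_n].

(* answer: 0 :: _  (or empty)  = "no feasible acceptable Pareto-optimal
   assignment exists";  c :: bits with c <> 0 = the assignment sending f_i
   to p_1 iff the i-th bit is nonzero *)
Definition decode1 n (out : seq nat) : option (assignment n 1) :=
  match out with
  | c.+1 :: bits => Some (fun i : 'I_n => if nth 0 bits i != 0 then Some ord0 else None)
  | _ => None
  end.

Definition correct_answer n t (I : instance n 1 t) (out : seq nat) : Prop :=
  match decode1 n out with
  | Some sg => pareto_optimal I sg
  | None => ~ exists sg : assignment n 1, pareto_optimal I sg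
  end.

From Pilot Require Import Defs.
From mathcomp Require Import all_boot.
From mathcomp Require Import zify.

Set Implicit Arguments.
Unset Strict Implicit.
Unset Printing Implicit Defensive.

(* A Pareto improvement therefore keeps every assigned
   family assigned and assigns some further acceptable family, so a feasible
   acceptable assignment is Pareto-optimal as soon as it is inclusion-maximal.
   First fit (scan the families in order and admit an acceptable family
   whenever its requirements still fit into the remaining capacity) produces
   such an assignment: a rejected family did not fit on top of admitted
   families that every improvement keeps.  In particular an answer always
   exists, and first fit runs on the RAM in O(n t) steps, linear in the length
   of the encoded instance. *)

Section FirstFit.

Variables (t : nat) (cap : nat -> nat) (adm : nat -> bool) (dem : nat -> nat -> nat).

Definition fits (used : nat -> nat) i :=
  adm i && all (fun s => used s + dem i s <= cap s) (iota 0 t).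

Fixpoint first_fit_load k : nat -> nat :=
  if k is k'.+1 then fun s =>
    first_fit_load k' s + (if fits (first_fit_load k') k' then dem k' s else 0)
  else fun=> 0.

Definition first_fit i := fits (first_fit_load i) i.

Lemma first_fit_loadS k s :
  first_fit_load k.+1 s = first_fit_load k s + (if first_fit k then dem k s else 0).
Proof. by []. Qed.

Lemma first_fit_load_le k s : s < t -> first_fit_load k s <= cap s.
Proof.
move=> lt_st; elim: k => [|k IHk] //=; rewrite -/(first_fit k).
case fit_k: (first_fit k); last by rewrite addn0.
by move: fit_k => /andP[_ /allP]; apply; rewrite mem_iota.
Qed.

Lemma first_fit_loadE k s : first_fit_load k s = \sum_(i < k | first_fit i) dem i s.
Proof.
elim: k => [|k IHk]; first by rewrite big_ord0.
by rewrite big_mkcond big_ord_recr /= -big_mkcond -IHk.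
Qed.

Lemma first_fit_maximal n (Q : pred 'I_n) (i : 'I_n) :
  (forall j : 'I_n, first_fit j -> Q j) -> Q i -> adm i -> ~~ first_fit i ->
  exists2 s, s < t & cap s < \sum_(j < n | Q j) dem j s.
Proof.
move=> sub_Q Q_i adm_i; rewrite /first_fit /fits adm_i => /allPn[s].
rewrite mem_iota -ltnNge => /andP[_ lt_st] overflow; exists s => //.
apply: leq_trans overflow _; rewrite (bigD1 i) //= addnC leq_add2l first_fit_loadE.
rewrite (big_ord_widen_cond n first_fit (dem^~ s) (ltnW (ltn_ord i))).
apply: sub_le_big => // [x y|j /andP[ff_j lt_ji]]; first exact: leq_addr.
by rewrite sub_Q //; apply: contraTneq lt_ji => ->; rewrite ltnn.
Qed.

End FirstFit.

Section SinglePlace.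

Variables (n t : nat) (I : instance n 1 t).

Lemma load1E (sg : assignment n 1) s :
  load I sg ord0 s = \sum_(i < n | sg i != None) req I i s.
Proof. by apply: eq_bigl => i; case: (sg i) => [p|] //; rewrite (ord1 p) eqxx. Qed.

Lemma maximal_pareto_optimal (sg : assignment n 1) :
  feasible I sg -> acceptable I sg ->
  (forall sg', feasible I sg' -> acceptable I sg' ->
     (forall i, sg i != None -> sg' i != None) -> forall i, sg' i != None -> sg i != None) ->
  pareto_optimal I sg.
Proof.
move=> feas acc_sg maximal; split=> //; split=> // -[sg' [feas' acc' weak [i strict]]].
have kept j : sg j != None -> sg' j != None.
  by have := weak j; case: (sg j) (sg' j) => [?|] [?|].
move: strict (kept i) (maximal sg' feas' acc' kept i).
case: (sg i) (sg' i) => [p|] [q|] //; last by move=> _ _ /(_ isT).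
by rewrite (ord1 p) (ord1 q) /spref andbN.
Qed.

Definition represents (cap : nat -> nat) (adm : nat -> bool) (dem : nat -> nat -> nat) :=
  [/\ forall s : 'I_t, cap s = uq I ord0 s,
      forall i : 'I_n, adm i = acc I i ord0
    & forall (i : 'I_n) (s : 'I_t), dem i s = req I i s].

Lemma first_fit_pareto_optimal cap adm dem (sg : assignment n 1) :
  no_lower_quotas I -> represents cap adm dem ->
  (forall i, (sg i != None) = first_fit t cap adm dem i) ->
  pareto_optimal I sg.
Proof.
move=> no_lq [capE admE demE] sgE.
have loadE s : load I sg ord0 s = first_fit_load t cap adm dem n s.
  by rewrite load1E first_fit_loadE; apply: eq_big => i; rewrite ?sgE ?demE.
apply: maximal_pareto_optimal.
- move=> j s; rewrite (ord1 j) no_lq loadE -capE; exact: first_fit_load_le.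
- move=> i j sgi; rewrite (ord1 j) -admE.
  by have := sgE i; rewrite sgi /first_fit /fits => /esym/andP[].
move=> sg' feas' acc' kept i picked'; rewrite sgE; apply: contraT => not_picked.
have adm_i : adm i.
  case sg'i: (sg' i) picked' => [p|] // _.
  by rewrite admE -(ord1 p) (acc' _ _ sg'i).
have kept_ff (j : 'I_n) : first_fit t cap adm dem j -> sg' j != None.
  by rewrite -sgE; apply: kept.
have [s lt_st overflow] := first_fit_maximal kept_ff picked' adm_i not_picked.
have /andP[_] := feas' ord0 (Ordinal lt_st); rewrite leqNgt load1E -(capE (Ordinal lt_st)).
by rewrite (eq_bigr _ (fun j _ => esym (demE j (Ordinal lt_st)))) overflow.
Qed.

End SinglePlace.

Section Reachability.

Variable p : program.

Definition reaches (st : state) (Q : nat -> state -> Prop) :=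
  exists k st', exec p k st = Some st' /\ Q k st'.

Lemma exec_add a b st : exec p (a + b) st = obind (exec p b) (exec p a st).
Proof. by elim: a st => [|a IHa] st //=; case: (step p st). Qed.

Lemma reaches_now st (Q : nat -> state -> Prop) : Q 0 st -> reaches st Q.
Proof. by exists 0, st. Qed.

Lemma reaches_step st st' Q :
  step p st = Some st' -> reaches st' (fun k => Q k.+1) -> reaches st Q.
Proof. by move=> stepE [k [st'' [run Qk]]]; exists k.+1, st''; rewrite /= stepE. Qed.

Lemma reaches_seq st Q1 Q : reaches st Q1 ->
  (forall k st', Q1 k st' -> reaches st' (fun k' => Q (k + k'))) -> reaches st Q.
Proof.
move=> [k [st' [run Q1k]]] /(_ _ _ Q1k) [k' [st'' [run' Qk]]].
by exists (k + k'), st''; rewrite exec_add run.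
Qed.

Lemma reaches_conseq st (Q1 Q : nat -> state -> Prop) :
  reaches st Q1 -> (forall k st', Q1 k st' -> Q k st') -> reaches st Q.
Proof. by move=> [k [st' [run Q1k]]] Q1Q; exists k, st'; split; last exact: Q1Q. Qed.

End Reachability.

Definition window_update (F : nat -> nat -> nat) (M : nat -> nat) q d c x :=
  if d <= x < d + c then F (M (q + (x - d))) (M x) else M x.

Lemma window_update0 F M q d x : window_update F M q d 0 x = M x.
Proof. by rewrite /window_update addn0 ltnNge andbN. Qed.

Lemma window_update_upd F M q d c x : q + c < d ->
  window_update F (upd M d (F (M q) (M d))) q.+1 d.+1 c x = window_update F M q d c.+1 x.
Proof.
move=> room; rewrite /window_update /upd.
have [->|ne_xd] := eqVneq x d.
  by rewrite ltnn andFb leqnn addnS ltnS leq_addr subnn addn0.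
have -> : (d.+1 <= x < d.+1 + c) = (d <= x < d + c.+1) by lia.
case: ifP => // win; rewrite ifN; last lia.
by congr (F (M _) _); lia.
Qed.

(* The input has M[1] = t, M[2] = n, the quotas of p_1 in M[3 .. 3+t), and
   then, from address [family_base i] on, the acceptability bit of family i
   followed by its t requirements; it ends at H = M[0] + 1.  The program copies
   the quotas to M[H .. H+t), where it keeps the remaining capacities, and
   writes the answer bit of family i to M[i+2], which the scan has already
   passed; it finally sets M[1] := 1 and M[0] := n + 1.  Registers: r0 = 0,
   r6 = 1, r1 = t, r2 = n, r3 = H, r8 = [family_base i], r12 = i + 2,
   r13 = number of families left; r9, r10, r15 drive the inner loops. *)
Definition first_fit_program : program := [::
 IConst 6 1; ILoad 1 6; IConst 7 2; ILoad 2 7; ILoad 3 0; IAdd 3 3 6;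
 IConst 8 3; IAdd 9 3 0; IAdd 10 1 0;
 (* 9 *) IJz 10 16; ILoad 11 8; IStore 9 11; IAdd 8 8 6; IAdd 9 9 6; ISub 10 10 6; IJz 0 9;
 (* 16 *) IConst 12 2; IAdd 13 2 0;
 (* 18 *) IJz 13 53; ILoad 14 8; IStore 12 0; IJz 14 48;
 (* 22 *) IAdd 9 8 6; IAdd 15 3 0; IAdd 10 1 0;
 (* 25 *) IJz 10 35; ILoad 11 9; ILoad 16 15; ISub 11 11 16; IJz 11 31; IJz 0 48;
 (* 31 *) IAdd 9 9 6; IAdd 15 15 6; ISub 10 10 6; IJz 0 25;
 (* 35 *) IAdd 9 8 6; IAdd 15 3 0; IAdd 10 1 0;
 (* 38 *) IJz 10 47; ILoad 11 9; ILoad 16 15; ISub 16 16 11; IStore 15 16;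
          IAdd 9 9 6; IAdd 15 15 6; ISub 10 10 6; IJz 0 38;
 (* 47 *) IStore 12 6;
 (* 48 *) IAdd 8 8 1; IAdd 8 8 6; IAdd 12 12 6; ISub 13 13 6; IJz 0 18;
 (* 53 *) IStore 6 6; IAdd 17 2 6; IStore 0 17; IHalt].

Local Notation P := first_fit_program.

Lemma updE f x v y : upd f x v y = if y == x then v else f y.
Proof. by []. Qed.

Ltac run_step :=
  apply: reaches_step; [reflexivity | cbn [pc regs Defs.mem]; rewrite ?updE /=].

Lemma copy_loop c : forall R M, R 10 = c -> R 0 = 0 -> R 6 = 1 -> R 8 + c <= R 9 ->
  reaches P (State 9 R M) (fun k st => [/\ k <= 7 * c + 1, pc st = 16,
    Defs.mem st =1 window_update (fun a _ => a) M (R 8) (R 9) c,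
    regs st 8 = R 8 + c & forall x, x \notin [:: 8; 9; 10; 11] -> regs st x = R x]).
Proof.
elim: c => [|c IHc] R M r10 r0 r6 room.
  run_step; rewrite r10; apply: reaches_now.
  by split; rewrite ?addn0 // => x; rewrite window_update0.
run_step; rewrite r10; do 6 run_step; rewrite r0.
apply: reaches_conseq; first by apply: IHc; rewrite ?updE //= r6; lia.
move=> k st [steps ? memE r8E frame]; split=> //.
- lia.
- by move=> x; rewrite memE !updE /= r6 !addn1 window_update_upd //; lia.
- by rewrite r8E !updE /= r6; lia.
- move=> x notin; rewrite frame //; move: notin; rewrite !updE !inE.
  by do ![case: eqP => //].
Qed.

Lemma all_iota0S (a : pred nat) c :
  all a (iota 0 c.+1) = a 0 && all (fun j => a j.+1) (iota 0 c).
Proof. by rewrite /= -add1n iotaDl all_map. Qed.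

Lemma check_loop c : forall R M, R 10 = c -> R 0 = 0 -> R 6 = 1 ->
  reaches P (State 25 R M) (fun k st => [/\ k <= 10 * c + 6,
    pc st = if all (fun j => M (R 9 + j) <= M (R 15 + j)) (iota 0 c) then 35 else 48,
    Defs.mem st = M & forall x, x \notin [:: 9; 10; 11; 15; 16] -> regs st x = R x]).
Proof.
elim: c => [|c IHc] R M r10 r0 r6.
  by run_step; rewrite r10; apply: reaches_now.
rewrite all_iota0S !addn0; run_step; rewrite r10; do 4 run_step; rewrite subn_eq0.
have [le_ij|gt_ij] /= := leqP (M (R 9)) (M (R 15)); last first.
  run_step; rewrite r0; apply: reaches_now; split=> //; first lia.
  by move=> x /=; rewrite !inE !updE; do ![case: eqP => //].
do 4 run_step; rewrite r0.
apply: reaches_conseq; first by apply: IHc; rewrite ?updE //= r6; lia.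
move=> k st [steps pcE ? frame]; split=> //.
- lia.
- rewrite pcE !updE /= r6; congr (if _ then _ else _).
  by apply: eq_in_all => j _; rewrite !addn1 !addSnnS.
- move=> x notin; rewrite frame //; move: notin; rewrite !updE !inE.
  by do ![case: eqP => //].
Qed.

Lemma subtract_loop c : forall R M, R 10 = c -> R 0 = 0 -> R 6 = 1 -> R 9 + c <= R 15 ->
  reaches P (State 38 R M) (fun k st => [/\ k <= 9 * c + 1, pc st = 47,
    Defs.mem st =1 window_update (fun a b => b - a) M (R 9) (R 15) c
  & forall x, x \notin [:: 9; 10; 11; 15; 16] -> regs st x = R x]).
Proof.
elim: c => [|c IHc] R M r10 r0 r6 room.
  run_step; rewrite r10; apply: reaches_now.
  by split=> // x; rewrite window_update0.
run_step; rewrite r10; do 8 run_step; rewrite r0.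
apply: reaches_conseq; first by apply: IHc; rewrite ?updE //= r6; lia.
move=> k st [steps ? memE frame]; split=> //.
- lia.
- by move=> x; rewrite memE !updE /= r6 !addn1 window_update_upd //; lia.
- move=> x notin; rewrite frame //; move: notin; rewrite !updE !inE.
  by do ![case: eqP => //].
Qed.

Section Layout.

Variables (t n : nat) (M0 : nat -> nat).

Definition family_base i := 3 + t + i * t.+1.

Local Notation H := (family_base n).

Definition input_cap s := M0 (3 + s).
Definition input_adm i := M0 (family_base i) != 0.
Definition input_dem i s := M0 ((family_base i).+1 + s).
Definition input_first_fit := first_fit t input_cap input_adm input_dem.

Local Notation load := (first_fit_load t input_cap input_adm input_dem).

Definition first_fit_inv i (M : nat -> nat) :=
  [/\ forall x, family_base i <= x < H -> M x = M0 x,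
      forall s, s < t -> M (H + s) = input_cap s - load i s
    & forall j, j < i -> M j.+2 = input_first_fit j].

Lemma family_base_mono i j : i < j -> (family_base i).+1 + t <= family_base j.
Proof. by rewrite /family_base; nia. Qed.

Lemma first_fit_inv_eq i M M' : first_fit_inv i M -> M =1 M' -> first_fit_inv i M'.
Proof. by move=> [in_M cap_M out_M] eqM; split=> *; rewrite -eqM; auto. Qed.

Lemma first_fit_inv_adm i M : i < n -> first_fit_inv i M ->
  M (family_base i) = M0 (family_base i).
Proof.
by move=> lt_in [in_M _ _]; apply: in_M; have := family_base_mono lt_in; lia.
Qed.

Ltac base_arith := unfold family_base in *; nia.

Lemma first_fit_inv_reject i M : i < n -> ~~ input_first_fit i -> first_fit_inv i M ->
  first_fit_inv i.+1 (upd M i.+2 0).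
Proof.
move=> lt_in rejected [in_M cap_M out_M]; have base_lt := family_base_mono lt_in.
rewrite /upd; split.
- by move=> x x_in; rewrite ifN; [apply: in_M|]; base_arith.
- move=> s lt_st; rewrite first_fit_loadS -/(input_first_fit i) (negbTE rejected).
  by rewrite addn0 ifN ?cap_M //; base_arith.
- move=> j; rewrite ltnS leq_eqVlt => /predU1P[->|lt_ji].
    by rewrite eqxx (negbTE rejected).
  by rewrite ifN ?out_M //; lia.
Qed.

Lemma first_fit_inv_check i M : i < n -> input_adm i -> first_fit_inv i M ->
  all (fun j => upd M i.+2 0 ((family_base i).+1 + j) <= upd M i.+2 0 (H + j)) (iota 0 t)
  = input_first_fit i.
Proof.
move=> lt_in adm_i [in_M cap_M _]; have base_lt := family_base_mono lt_in.
rewrite /input_first_fit /first_fit /fits adm_i /=.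
apply: eq_in_all => s; rewrite mem_iota add0n => /andP[_ lt_st].
rewrite /upd !ifN; try base_arith.
rewrite cap_M // in_M; last base_arith.
by rewrite leq_subRL ?first_fit_load_le // addnC.
Qed.

Lemma first_fit_inv_accept i M : i < n -> input_first_fit i -> first_fit_inv i M ->
  first_fit_inv i.+1
    (upd (window_update (fun a b => b - a) (upd M i.+2 0) (family_base i).+1 H t) i.+2 1).
Proof.
move=> lt_in picked [in_M cap_M out_M]; have base_lt := family_base_mono lt_in.
rewrite /upd /window_update; split.
- by move=> x x_in; rewrite !ifN; try apply: in_M; base_arith.
- move=> s lt_st; rewrite first_fit_loadS -/(input_first_fit i) picked ifN; last base_arith.
  rewrite ifT; last lia.
  rewrite !ifN; try base_arith.
  rewrite cap_M // in_M; last base_arith.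
  by rewrite subnDA addKn /input_dem.
- move=> j; rewrite ltnS leq_eqVlt => /predU1P[->|lt_ji]; first by rewrite eqxx picked.
  by rewrite !ifN ?out_M //; base_arith.
Qed.

End Layout.

Section FamilyLoop.

Variables (t n : nat) (M0 : nat -> nat).

Local Notation H := (family_base t n).

Record loop_regs i c (R : nat -> nat) : Prop := LoopRegs {
  reg_zero : R 0 = 0;
  reg_t : R 1 = t;
  reg_n : R 2 = n;
  reg_end : R 3 = H;
  reg_one : R 6 = 1;
  reg_family : R 8 = family_base t i;
  reg_out : R 12 = i.+2;
  reg_left : R 13 = c }.

Lemma loop_regs_frame i c R R' (X : seq nat) :
  (forall x, x \notin X -> R' x = R x) ->
  ~~ has (fun x => x \in X) [:: 0; 1; 2; 3; 6; 8; 12; 13] ->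
  loop_regs i c R -> loop_regs i c R'.
Proof.
move=> frame /hasPn disjoint [? ? ? ? ? ? ? ?].
by split; rewrite frame ?disjoint.
Qed.

Lemma loop_regs_upd i c R x v : x \notin [:: 0; 1; 2; 3; 6; 8; 12; 13] ->
  loop_regs i c R -> loop_regs i c (upd R x v).
Proof. by move=> notin [? ? ? ? ? ? ? ?]; split; rewrite /upd; case: eqP notin => [<-|]. Qed.

Lemma next_family i c R M : loop_regs i c.+1 R ->
  reaches P (State 48 R M) (fun k st =>
    [/\ k = 5, pc st = 18, loop_regs i.+1 c (regs st) & Defs.mem st = M]).
Proof.
case=> r0 r1 r2 r3 r6 r8 r12 r13.
do 5 run_step; rewrite r0; apply: reaches_now.
split=> //; split; rewrite /= ?updE /= ?r0 ?r1 ?r2 ?r3 ?r6 ?r8 ?r12 ?r13 //.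
- by rewrite /family_base; lia.
- by rewrite addn1.
- by rewrite subn1.
Qed.

Lemma reject_family i c R M : i < n -> ~~ input_first_fit t M0 i ->
  loop_regs i c.+1 R -> first_fit_inv t n M0 i M ->
  reaches P (State 48 R (upd M i.+2 0)) (fun k st => [/\ k = 5, pc st = 18,
    loop_regs i.+1 c (regs st) & first_fit_inv t n M0 i.+1 (Defs.mem st)]).
Proof.
move=> lt_in rejected regsR invM; apply: reaches_conseq (next_family _ regsR) _.
by move=> k st [-> ? ? ->]; split=> //; apply: first_fit_inv_reject.
Qed.

Lemma accept_family i c R M : i < n -> input_first_fit t M0 i ->
  loop_regs i c.+1 R -> first_fit_inv t n M0 i M ->
  reaches P (State 35 R (upd M i.+2 0)) (fun k st => [/\ k <= 9 * t + 10, pc st = 18,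
    loop_regs i.+1 c (regs st) & first_fit_inv t n M0 i.+1 (Defs.mem st)]).
Proof.
move=> lt_in picked regsR invM; case: (regsR) => r0 r1 r2 r3 r6 r8 r12 r13.
do 3 run_step; rewrite r8 r6 r3 r0 r1 addn1 addn0.
apply: reaches_seq.
  by apply: subtract_loop; rewrite ?updE //= addn0; apply: family_base_mono.
move=> k [pc1 R1 M1] /= [steps1 -> memE frame].
have regsR1 : loop_regs i c.+1 R1.
  by apply: loop_regs_frame frame isT _; do 3 apply: loop_regs_upd => //.
run_step; rewrite (reg_out regsR1) (reg_one regsR1).
apply: reaches_conseq (next_family _ regsR1) _ => k' st [-> ? ? ->]; split=> //; first lia.
apply: first_fit_inv_eq (first_fit_inv_accept lt_in picked invM) _ => x.
by rewrite /upd memE !updE /= addn0.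
Qed.

Lemma family_step i c R M : i < n -> loop_regs i c.+1 R -> first_fit_inv t n M0 i M ->
  reaches P (State 18 R M) (fun k st => [/\ k <= 25 * t.+1, pc st = 18,
    loop_regs i.+1 c (regs st) & first_fit_inv t n M0 i.+1 (Defs.mem st)]).
Proof.
move=> lt_in regsR invM; case: (regsR) => r0 r1 r2 r3 r6 r8 r12 r13.
run_step; rewrite r13; do 3 run_step; rewrite r12 r0 r8 (first_fit_inv_adm lt_in invM).
have regsR1 : loop_regs i c.+1 (upd R 14 (M0 (family_base t i))) by apply: loop_regs_upd.
have [adm0|adm_i] := eqVneq (M0 (family_base t i)) 0.
  have rejected : ~~ input_first_fit t M0 i.
    by rewrite /input_first_fit /first_fit /fits /input_adm adm0.
  apply: reaches_conseq (reject_family lt_in rejected regsR1 invM) _.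
  by move=> k st [-> ? ? ?]; split=> //; nia.
do 3 run_step; rewrite r8 r6 r3 r0 addn1 addn0.
apply: reaches_seq; first by apply: check_loop; rewrite ?updE.
move=> k [pc2 R2 M2] /= [steps2 pcE -> frame].
rewrite !updE /= r1 addn0 (first_fit_inv_check lt_in adm_i invM) in pcE; subst pc2.
have regsR2 : loop_regs i c.+1 R2.
  by apply: loop_regs_frame frame isT _; do 3 apply: loop_regs_upd => //.
case picked: (input_first_fit t M0 i).
  apply: reaches_conseq (accept_family lt_in picked regsR2 invM) _.
  by move=> k' st [? ? ? ?]; split=> //; nia.
apply: reaches_conseq (reject_family lt_in (negbT picked) regsR2 invM) _.
by move=> k' st [-> ? ? ?]; split=> //; nia.
Qed.

Lemma family_loop c : forall i R M, i + c = n -> loop_regs i c R ->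
  first_fit_inv t n M0 i M ->
  reaches P (State 18 R M) (fun k st => [/\ k <= c * (25 * t.+1), pc st = 18,
    loop_regs n 0 (regs st) & first_fit_inv t n M0 n (Defs.mem st)]).
Proof.
elim: c => [|c IHc] i R M; first by rewrite addn0 => <- regsR invM; apply: reaches_now.
move=> sum_n regsR invM.
apply: reaches_seq; first by apply: (family_step _ regsR invM); lia.
move=> k [pc1 R1 M1] /= [steps -> regsR1 invM1].
apply: reaches_conseq; first by apply: IHc regsR1 invM1; lia.
by move=> k' st [steps' ? ? ?]; split=> //; nia.
Qed.

End FamilyLoop.

Lemma first_fit_run s t n : nth 0 s 0 = t -> nth 0 s 1 = n -> (size s).+1 = family_base t n ->
  let M0 := Defs.mem (init_state s) in
  reaches P (init_state s) (fun k st => [/\ k <= 20 + 7 * t + n * (25 * t.+1),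
    step P st = None &
    output st = 1 :: mkseq (fun i => nat_of_bool (input_first_fit t M0 i)) n]).
Proof.
move=> t_at n_at sizeE M0; rewrite /init_state.
do 9 run_step; rewrite t_at n_at addn1 addn0.
apply: reaches_seq.
  by apply: copy_loop; rewrite ?updE //= addn0 sizeE /family_base; lia.
move=> k [pc1 R1 M1] /= [steps1 -> memE1 r8 frame1]; rewrite !updE /= in memE1.
do 2 run_step; rewrite !frame1 ?updE //= addn0.
have regs0 : loop_regs t n 0 n (upd (upd R1 12 2) 13 n).
  by split; rewrite ?updE //= ?frame1 ?updE //=.
have inv0 : first_fit_inv t n M0 0 M1.
  split=> // [x x_in|s' lt_st]; rewrite memE1 /window_update.
    by rewrite ifN //; move: x_in; rewrite -sizeE /family_base; lia.
  by rewrite -sizeE ifT ?subn0 ?addKn //; lia.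
apply: reaches_seq; first exact: family_loop regs0 inv0.
move=> k' [pc2 R2 M2] /= [steps2 -> [r0 _ r2 _ r6 _ _ r13] [_ _ out2]].
run_step; rewrite r13; do 3 run_step; rewrite r6 r2 r0.
apply: reaches_now; split=> //; first by lia.
rewrite /output /= !updE /= addn1 /mkseq /= (iotaDl 1 0) -map_comp.
congr (_ :: _); apply/eq_in_map => j; rewrite mem_iota => /andP[_ lt_jn] /=.
by rewrite add1n !updE /= out2.
Qed.

Lemma size_flatten_map_const (T U : Type) (f : T -> seq U) b (l : seq T) :
  (forall x, size (f x) = b) -> size (flatten (map f l)) = size l * b.
Proof. by move=> size_f; elim: l => [|x l IHl] //=; rewrite size_cat size_f IHl mulSn. Qed.

Lemma nth_flatten_map_const (T U : Type) (f : T -> seq U) b (l : seq T) x0 y0 i k :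
  (forall x, size (f x) = b) -> i < size l -> k < b ->
  nth y0 (flatten (map f l)) (i * b + k) = nth y0 (f (nth x0 l i)) k.
Proof.
move=> size_f; elim: l i => [|x l IHl] [|i] //= lt_il lt_kb; rewrite nth_cat size_f.
  by rewrite lt_kb.
by rewrite mulSn -addnA ltnNge leq_addr /= addKn IHl.
Qed.

Lemma size_le_enc_size s : size s <= enc_size s.
Proof. by rewrite /enc_size -sum1_size; apply: leq_sum. Qed.

Lemma encode1_layout n t (I : instance n 1 t) :
  let s := encode1 I in let M0 := Defs.mem (init_state s) in
  [/\ nth 0 s 0 = t, nth 0 s 1 = n, (size s).+1 = family_base t n
    & represents I (input_cap M0) (input_adm t M0) (input_dem t M0)].
Proof.
pose block (i : 'I_n) := nat_of_bool (acc I i ord0) :: [seq req I i s | s <- enum 'I_t].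
have size_block i : size (block i) = t.+1 by rewrite /= size_map size_enum_ord.
have size_caps : size [seq uq I ord0 s | s <- enum 'I_t] = t by rewrite size_map size_enum_ord.
have familyE (i : 'I_n) k : k < t.+1 ->
    Defs.mem (init_state (encode1 I)) (family_base t i + k) = nth 0 (block i) k.
  move=> lt_kt; have -> : family_base t i + k = (2 + t + (i * t.+1 + k)).+1.
    by rewrite /family_base; lia.
  rewrite /= nth_cat size_caps ltnNge leq_addr /= addKn.
  by rewrite (@nth_flatten_map_const _ _ _ _ _ i) ?size_enum_ord ?nth_ord_enum.
split=> //.
- rewrite /encode1 /= size_cat size_caps (size_flatten_map_const _ size_block).
  by rewrite size_enum_ord /family_base; lia.
split=> [s|i|i s].
- rewrite /input_cap /= nth_cat size_caps ltn_ord add0n (nth_map s) ?size_enum_ord //.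
  by rewrite nth_ord_enum.
- by rewrite /input_adm -[family_base t i]addn0 familyE // /block /=; case: (acc I i ord0).
- rewrite /input_dem addSnnS familyE ?ltnS // /block /= (nth_map s) ?size_enum_ord //.
  by rewrite nth_ord_enum.
Qed.

Theorem proposition12 :
  exists (p : program) (c d : nat),
    forall (n t : nat) (I : instance n 1 t),
      weak_order_prefs I -> no_lower_quotas I ->
      exists (k : nat) (out : seq nat),
        [/\ halts_in p (encode1 I) k out,
            k <= c * (enc_size (encode1 I)).+1 ^ d
          & correct_answer I out].
Proof.
exists first_fit_program, 40, 1 => n t I _ no_lq.
have [t_at n_at sizeE repr] := encode1_layout I.
have [k [st [run [steps halt out]]]] := first_fit_run t_at n_at sizeE.
exists k, (output st); split; first by exists st.
  have := size_le_enc_size (encode1 I).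
  by move: sizeE; rewrite /family_base expn1; nia.
rewrite /correct_answer out; apply: first_fit_pareto_optimal no_lq repr _ => i.
by rewrite nth_mkseq // /input_first_fit; case: first_fit.
Qed.
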